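(* Let $\alpha>2$ and let $K\ge3$ be an integer. Set $C_{2,K}=\frac1K$ if $K$ is even and $C_{2,K}=\frac1K\cdot\frac{K^2}{K^2-1}$ if $K$ is odd. Then for every $p,q\in\operatorname{relint}(\Delta^K)$, the inequality \[ D_\alpha(p\Vert q)\ \ge\ \frac C2\,\|p-q\|_1^2 \] holds with each of the following choices of $C$: (1) $C=C_{2,K}\cdot\left(\min_{k\in[K]}\min\{p_k,q_k\}\right)^{\alpha-2}$; (2) $C=C_{2,K}\cdot\frac{2}{\alpha(\alpha-1)}\cdot\left(\min_{k\in[K]}p_k\right)^{\alpha-2}$; (3) $C=C_{2,K}\cdot\frac{2}{\alpha}\cdot\left(\min_{k\in[K]}q_k\right)^{\alpha-2}$.
   Context: $[K]=\{1,\dots,K\}$, $\Delta^K=\{p\in[0,1]^K:\sum_k p_k=1\}$, $\operatorname{relint}(\Delta^K)=\Delta^K\cap(0,1)^K$. For $p,q\in(0,+\infty)^K$ and $\alpha\notin\{0,1\}$, $D_\alpha(p\Vert q)=\frac1\alpha\sum_{k=1}^K\frac{p_k^\alpha+(\alpha-1)q_k^\alpha-\alpha p_kq_k^{\alpha-1}}{\alpha-1}$, the Bregman divergence of $-S_\alpha$ with $S_\alpha(p)=\frac{\sum_kp_k^\alpha}{\alpha(1-\alpha)}$. $\|x\|_1=\sum_k|x_k|$. *)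

From HB Require Import structures.
From mathcomp Require Import all_boot all_order all_algebra.
From mathcomp Require Import all_classical all_reals all_analysis.
Set Implicit Arguments. Unset Strict Implicit. Unset Printing Implicit Defensive.
Import Order.TTheory GRing.Theory Num.Theory.
Local Open Scope ring_scope.

Definition relint_simplex (R : realType) (K : nat) (p : 'I_K -> R) : Prop :=
  (forall k, 0 < p k < 1) /\ \sum_(k < K) p k = 1.

(* alpha-divergence (Bregman divergence of -S_alpha), alpha <> 0,1,
   for positive vectors; real powers via powR. *)
Definition Dalpha (R : realType) (K : nat) (alpha : R) (p q : 'I_K -> R) : R :=
  alpha^-1 * \sum_(k < K)
    ((p k `^ alpha + (alpha - 1) * q k `^ alpha
      - alpha * p k * q k `^ (alpha - 1)) / (alpha - 1)).

Definition norm1 (R : realType) (K : nat) (x : 'I_K -> R) : R :=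
  \sum_(k < K) `|x k|.

Definition C2K (R : realType) (K : nat) : R :=
  if ~~ odd K then (K%:R)^-1
  else (K%:R)^-1 * ((K%:R) ^+ 2 / ((K%:R) ^+ 2 - 1)).

(* Write D_alpha(p || q) = (alpha (alpha - 1))^-1 * sum_k B(p_k, q_k), where B is the
   Bregman divergence of x |-> x^alpha.  Each constant comes from a pointwise bound
   B(a, b) >= kappa (a - b)^2: for (1), the second derivative alpha (alpha - 1) x^(alpha - 2)
   is at least alpha (alpha - 1) m^(alpha - 2) between a and b; for (2) and (3), exact
   identities write B(a, b) minus the quadratic term through Bregman divergences of the
   convex function x |-> x^(alpha - 1).
   It remains to show sum_k x_k^2 >= C_{2,K} ||x||_1^2 when sum_k x_k = 0.  If S is the
   positive mass of x and a, b count its positive and negative entries, then ||x||_1 = 2 S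
   and Cauchy-Schwarz gives sum_k x_k^2 >= S^2 (1/a + 1/b); finally 4ab/(a + b) <= 1/C_{2,K}
   because a + b <= K, and a + b = K forces a <> b when K is odd. *)

From HB Require Import structures.
From mathcomp Require Import all_boot all_order all_algebra.
From mathcomp Require Import all_classical all_reals all_analysis.
From mathcomp Require Import ring lra zify.
Import Order.TTheory GRing.Theory Num.Theory.
Import numFieldNormedType.Exports.
Set Implicit Arguments.
Unset Strict Implicit.
Unset Printing Implicit Defensive.

Local Open Scope ring_scope.
Local Open Scope classical_set_scope.

Section Bregman.
Variable R : realType.

Lemma ger0_is_derive_le (f df : R -> R) (x y : R) : x <= y ->
  (forall z, x <= z <= y -> is_derive z 1 f (df z)) ->
  (forall z, x <= z <= y -> 0 <= df z) -> f x <= f y.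
Proof.
move=> xy fD df_ge0.
have fC : {within `[x, y], continuous f}.
  by apply: derivable_within_continuous => z; rewrite in_itv /= => /fD [].
have [c] := MVT_segment xy (fun z zI => fD z (subset_itv_oo_cc zI)) fC.
rewrite in_itv /= => cI fE.
by rewrite -subr_ge0 fE mulr_ge0 ?subr_ge0 ?df_ge0.
Qed.

Lemma ler0_is_derive_ge (f df : R -> R) (x y : R) : x <= y ->
  (forall z, x <= z <= y -> is_derive z 1 f (df z)) ->
  (forall z, x <= z <= y -> df z <= 0) -> f y <= f x.
Proof.
move=> xy fD df_le0; rewrite -lerN2.
apply: (@ger0_is_derive_le (- f) (- df)) => // z zI.
  exact: is_deriveN (fD z zI).
by rewrite /= oppr_ge0 df_le0.
Qed.

Definition bregman (f df : R -> R) (a b : R) : R := f a - f b - df b * (a - b).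

Lemma bregman_ge_sqr (f df : R -> R) (c x y : R) :
  (forall z, Num.min x y <= z <= Num.max x y -> is_derive z 1 f (df z)) ->
  (forall s t, Num.min x y <= s -> s <= t -> t <= Num.max x y ->
     c * (t - s) <= df t - df s) ->
  c / 2 * (y - x) ^+ 2 <= bregman f df y x.
Proof.
move=> fD df_slope.
pose g t := f t - df x * t - c / 2 * (t - x) ^+ 2.
pose dg z := df z - df x - c * (z - x).
have gD z : Num.min x y <= z <= Num.max x y -> is_derive z 1 g (dg z).
  move=> /fD fz.
  have := is_deriveB (is_deriveB fz (is_deriveZ (df x) (is_derive_id z 1)))
    (is_deriveZ (c / 2)
      (is_deriveX 2 (is_deriveB (is_derive_id z 1) (is_derive_cst x z 1)))).
  move/is_derive_eq; apply.
  rewrite /dg /GRing.scale /= -[(id - cst x) z]/(z - x) expr1 subr0 !mulr1.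
  by rewrite mulrA divfK // pnatr_eq0.
suff : g x <= g y by rewrite /g /bregman subrr expr0n /= mulr0 subr0; lra.
have [xy | yx] := lerP x y.
- have [mE ME] : Num.min x y = x /\ Num.max x y = y by rewrite min_l // max_r.
  apply: (@ger0_is_derive_le g dg _ _ xy) => z zI; first by apply: gD; rewrite mE ME.
  have := df_slope x z; rewrite mE ME lexx; case/andP: zI => xz zy.
  by rewrite /dg; move/(_ isT xz zy); lra.
- have [mE ME] : Num.min x y = y /\ Num.max x y = x by rewrite min_r ?max_l // ltW.
  apply: (@ler0_is_derive_ge g dg _ _ (ltW yx)) => z zI; first by apply: gD; rewrite mE ME.
  have := df_slope z x; rewrite mE ME lexx; case/andP: zI => yz zx.
  by rewrite /dg; move/(_ yz zx isT); lra.
Qed.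

Lemma gt0_mulr_powRB1 (r x : R) : 0 < x -> x * x `^ (r - 1) = x `^ r.
Proof.
move=> x0; rewrite -{1}(powRr1 (ltW x0)) -powRD; first by rewrite addrC subrK.
by apply/implyP => _; rewrite gt_eqF.
Qed.

Lemma gt0_powR_subr2 (r x : R) : 0 < x ->
  x `^ (r - 1) = x * x `^ (r - 2) /\ x `^ r = x * (x * x `^ (r - 2)).
Proof.
move=> x0; have -> : r - 2 = r - 1 - 1 by ring.
by rewrite !gt0_mulr_powRB1.
Qed.

Definition powR_bregman (al : R) : R -> R -> R :=
  bregman (@powR R ^~ al) (fun x => al * x `^ (al - 1)).

Lemma powR_bregman_ge0 (be a b : R) : 1 <= be -> 0 < a -> 0 < b ->
  0 <= powR_bregman be a b.
Proof.
move=> be1 a0 b0; have min0 : 0 < Num.min b a by rewrite lt_min b0 a0.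
have := @bregman_ge_sqr (@powR R ^~ be) (fun x => be * x `^ (be - 1)) 0 b a.
rewrite !mul0r; apply=> [z /andP[mz _] | s t ms st _].
  exact/is_derive1_powR/(lt_le_trans min0).
have s0 : 0 <= s := ltW (lt_le_trans min0 ms).
rewrite mul0r subr_ge0 ler_wpM2l ?(le_trans ler01) //.
by apply: ge0_ler_powR; rewrite ?subr_ge0 // nnegrE (le_trans s0).
Qed.

Lemma powR_bregman_ge_sqr (al m a b : R) :
  2 <= al -> 0 < a -> 0 < b -> 0 <= m -> m <= a -> m <= b ->
  al * (al - 1) * m `^ (al - 2) / 2 * (a - b) ^+ 2 <= powR_bregman al a b.
Proof.
move=> al2 a0 b0 m0 ma mb; have min0 : 0 < Num.min b a by rewrite lt_min b0 a0.
apply: bregman_ge_sqr => [z /andP[mz _] | s t ms st _].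
  exact/is_derive1_powR/(lt_le_trans min0).
have s0 : 0 < s := lt_le_trans min0 ms.
have ms2 : m `^ (al - 2) <= s `^ (al - 2).
  apply: ge0_ler_powR; rewrite ?subr_ge0 ?nnegrE ?(ltW s0) //.
  by apply: le_trans ms; rewrite le_min ma mb.
have al1 : 1 <= al - 1 by lra.
have := powR_bregman_ge0 al1 (lt_le_trans s0 st) s0.
rewrite /powR_bregman /bregman (_ : al - 1 - 1 = al - 2); last by ring.
have : al * (al - 1) * m `^ (al - 2) * (t - s) <= al * (al - 1) * s `^ (al - 2) * (t - s).
  by rewrite ler_wpM2r ?subr_ge0 // ler_wpM2l // mulr_ge0 //; lra.
nra.
Qed.

Lemma powR_bregman_expand_r (al a b : R) : 0 < a -> 0 < b ->
  powR_bregman al a b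
  = (al - 1) * b `^ (al - 2) * (a - b) ^+ 2 + a * powR_bregman (al - 1) a b.
Proof.
move=> a0 b0; have [ea1 ea] := gt0_powR_subr2 al a0.
have [eb1 eb] := gt0_powR_subr2 al b0.
rewrite /powR_bregman /bregman (_ : al - 1 - 1 = al - 2); last by ring.
by rewrite ea1 ea eb1 eb; ring.
Qed.

Lemma powR_bregman_expand_l (al a b : R) : 0 < a -> 0 < b ->
  (al - 1) * (powR_bregman al a b - a `^ (al - 2) * (a - b) ^+ 2)
  = b * (al * powR_bregman (al - 1) a b + powR_bregman (al - 1) b a).
Proof.
move=> a0 b0; have [ea1 ea] := gt0_powR_subr2 al a0.
have [eb1 eb] := gt0_powR_subr2 al b0.
rewrite /powR_bregman /bregman (_ : al - 1 - 1 = al - 2); last by ring.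
by rewrite ea1 ea eb1 eb; ring.
Qed.

Lemma powR_bregman_ge_sqr_r (al m a b : R) :
  2 <= al -> 0 < a -> 0 < b -> 0 <= m -> m <= b ->
  (al - 1) * m `^ (al - 2) * (a - b) ^+ 2 <= powR_bregman al a b.
Proof.
move=> al2 a0 b0 m0 mb; have al1 : 1 <= al - 1 by lra.
rewrite powR_bregman_expand_r // -[X in X <= _]addr0.
apply: lerD; last by rewrite mulr_ge0 ?powR_bregman_ge0 ?(ltW a0).
apply: ler_wpM2r; first exact: sqr_ge0.
apply: ler_wpM2l; first lra.
by apply: ge0_ler_powR; rewrite ?subr_ge0 ?nnegrE ?(ltW b0).
Qed.

Lemma powR_bregman_ge_sqr_l (al m a b : R) :
  2 <= al -> 0 < a -> 0 < b -> 0 <= m -> m <= a ->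
  m `^ (al - 2) * (a - b) ^+ 2 <= powR_bregman al a b.
Proof.
move=> al2 a0 b0 m0 ma; have al1 : 1 <= al - 1 by lra.
have : 0 <= (al - 1) * (powR_bregman al a b - a `^ (al - 2) * (a - b) ^+ 2).
  rewrite powR_bregman_expand_l // mulr_ge0 ?(ltW b0) // addr_ge0 ?powR_bregman_ge0 //.
  by rewrite mulr_ge0 ?powR_bregman_ge0 //; lra.
rewrite pmulr_rge0 ?subr_ge0; last lra.
apply: le_trans; rewrite ler_wpM2r ?sqr_ge0 //.
by apply: ge0_ler_powR; rewrite ?subr_ge0 ?nnegrE ?(ltW a0).
Qed.

End Bregman.

Lemma mul4_leq_sqrB_odd (a b K : nat) : (a + b <= K)%N ->
  (4 * a * b * K <= (a + b) * (K ^ 2 - odd K))%N.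
Proof.
have amgm : (4 * a * b <= (a + b) ^ 2)%N by have [ab | ba] := leqP a b; nia.
rewrite leq_eqVlt => /orP[/eqP <- | ltK]; last first.
  have : ((a + b) * K <= K ^ 2 - odd K)%N by have := leq_b1 (odd K); nia.
  nia.
case oddK : (odd (a + b)); rewrite mulnC leq_mul2l; last by rewrite subn0 amgm orbT.
have ab : a != b by apply: contraTneq oddK => ->; rewrite addnn odd_double.
suff : (4 * a * b < (a + b) ^ 2)%N by move=> ?; apply/orP; right; lia.
by move: ab; rewrite neq_ltn => /orP[] ?; nia.
Qed.

Section Combinatorics.
Variable R : realType.

Lemma C2KE (K : nat) : (1 < K)%N -> C2K R K = K%:R / (K ^ 2 - odd K)%:R.
Proof.
move=> K1; have K2 : (2 : R) <= K%:R by rewrite ler_nat.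
rewrite /C2K natrB ?natrX; last by apply: leq_trans (leq_b1 _) _; rewrite expn_gt0 ltnW.
case: (odd K) => /=.
  have : (0 : R) < K%:R ^+ 2 - 1 by nra.
  by move=> D0; field; rewrite gt_eqF //; lra.
by field; rewrite gt_eqF //; lra.
Qed.

Lemma C2K_mul4_le (a b K : nat) : (0 < a)%N -> (0 < b)%N -> (a + b <= K)%N ->
  4 * C2K R K * (a%:R * b%:R) <= a%:R + b%:R.
Proof.
move=> a0 b0 abK; have K1 : (1 < K)%N by lia.
have D0 : (0 < K ^ 2 - odd K)%N by have := leq_b1 (odd K); nia.
rewrite C2KE //.
have -> : 4 * (K%:R / (K ^ 2 - odd K)%:R) * (a%:R * b%:R)
    = (4 * a * b * K)%:R / (K ^ 2 - odd K)%:R :> R.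
  by rewrite !natrM; field; rewrite pnatr_eq0 -lt0n.
rewrite ler_pdivrMr ?ltr0n // -natrD -natrM ler_nat.
exact: mul4_leq_sqrB_odd.
Qed.

Lemma sqr_sum_le_card {I : finType} (P : pred I) (y : I -> R) :
  (\sum_(i | P i) y i) ^+ 2 <= #|P|%:R * \sum_(i | P i) y i ^+ 2.
Proof.
have [P0 | Ppos] := posnP #|P|.
  by rewrite big_pred0 ?expr0n ?P0 ?mul0r // => i; apply: card0_eq P0 i.
set S := \sum_(i | P i) y i; set Q := \sum_(i | P i) y i ^+ 2; set n : R := #|P|%:R.
have n0 : 0 < n by rewrite ltr0n.
have : 0 <= \sum_(i | P i) (n * y i - S) ^+ 2 by apply: sumr_ge0 => i _; apply: sqr_ge0.
have -> : \sum_(i | P i) (n * y i - S) ^+ 2 = n * (n * Q - S ^+ 2).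
  rewrite (eq_bigr (fun i => n ^+ 2 * y i ^+ 2 - (2 * n * S) * y i + S ^+ 2)); last first.
    by move=> i _; ring.
  rewrite big_split sumrB /= -!mulr_sumr sumr_const -/S -/Q -mulr_natr -/n; ring.
by rewrite pmulr_rge0 // subr_ge0.
Qed.

Lemma sum_split_sign {I : finType} (x F : I -> R) : (forall i, x i = 0 -> F i = 0) ->
  \sum_i F i = \sum_(i | 0 < x i) F i + \sum_(i | x i < 0) F i.
Proof.
move=> F0; rewrite [in RHS]big_mkcond [X in _ + X]big_mkcond -big_split /=.
apply: eq_bigr => i _.
by case: ltgtP => [_ | _ | /esym/F0 ->]; rewrite ?addr0 ?add0r.
Qed.

Lemma C2K_norm1_sqr_le (K : nat) (x : 'I_K -> R) : \sum_(k < K) x k = 0 ->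
  C2K R K * norm1 x ^+ 2 <= \sum_(k < K) x k ^+ 2.
Proof.
move=> x_sum0; pose pos k := 0 < x k; pose neg k := x k < 0.
set S := \sum_(k | pos k) x k; set Qp := \sum_(k | pos k) x k ^+ 2;
  set Qn := \sum_(k | neg k) x k ^+ 2.
have negE : \sum_(k | neg k) x k = - S.
  by apply/eqP; rewrite -addr_eq0 addrC -(sum_split_sign (F := x) (fun _ => id)) x_sum0.
have -> : norm1 x = 2 * S.
  rewrite /norm1 (sum_split_sign (x := x) (F := fun k => `|x k|)) => [|k ->];
    last by rewrite normr0.
  rewrite (eq_bigr x) => [|k /gtr0_norm //]; rewrite -/S.
  by rewrite (eq_bigr (fun k => - x k)) => [|k /ltr0_norm //]; rewrite sumrN negE; ring.
rewrite (sum_split_sign (x := x) (F := fun k => x k ^+ 2)) => [|k ->]; last by rewrite expr0n.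
rewrite -/Qp -/Qn.
have csp := sqr_sum_le_card pos x; have csn := sqr_sum_le_card neg x.
rewrite -/S -/Qp -/Qn in csp; rewrite negE sqrrN -/Qn in csn.
have Qp0 : 0 <= Qp by apply: sumr_ge0 => k _; apply: sqr_ge0.
have Qn0 : 0 <= Qn by apply: sumr_ge0 => k _; apply: sqr_ge0.
have S0_le : S ^+ 2 <= 0 -> C2K R K * (2 * S) ^+ 2 <= Qp + Qn.
  move=> S2; have -> : S = 0 by apply/eqP; rewrite -sqrf_eq0 eq_le S2 sqr_ge0.
  by rewrite mulr0 expr0n mulr0 addr_ge0.
have [a0|a0] := posnP #|pos|; first by apply: S0_le; rewrite a0 mul0r in csp.
have [b0|b0] := posnP #|neg|; first by apply: S0_le; rewrite b0 mul0r in csn.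
have card : (#|pos| + #|neg| <= K)%N.
  rewrite -[X in (_ <= X)%N](card_ord K) -(cardC pos) leq_add2l.
  by apply: subset_leq_card; apply/fintype.subsetP => k; rewrite !inE /pos -leNgt => /ltW.
have := C2K_mul4_le a0 b0 card.
set A : R := #|pos|%:R in csp *; set B : R := #|neg|%:R in csn *.
have A0 : 0 < A by rewrite ltr0n.
have B0 : 0 < B by rewrite ltr0n.
move=> hc; rewrite -(ler_pM2l (mulr_gt0 A0 B0)).
have : S ^+ 2 * (4 * C2K R K * (A * B)) <= S ^+ 2 * (A + B) by rewrite ler_wpM2l ?sqr_ge0.
have : B * S ^+ 2 <= B * (A * Qp) by rewrite ler_wpM2l ?(ltW B0).
have : A * S ^+ 2 <= A * (B * Qn) by rewrite ler_wpM2l ?(ltW A0).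
lra.
Qed.

End Combinatorics.

Section AlphaDivergence.
Variable R : realType.

Lemma Dalpha_bregman (K : nat) (al : R) (p q : 'I_K -> R) :
  al != 0 -> al != 1 -> (forall k, 0 < q k) ->
  Dalpha al p q = (al * (al - 1))^-1 * \sum_(k < K) powR_bregman al (p k) (q k).
Proof.
move=> al0 al1 q0; rewrite /Dalpha invfM -mulrA; congr (_ * _).
rewrite mulr_sumr; apply: eq_bigr => k _.
rewrite /powR_bregman /bregman -(gt0_mulr_powRB1 al (q0 k)).
by field; rewrite subr_eq0.
Qed.

Lemma Dalpha_ge_norm1_sqr (K : nat) (al c kappa : R) (p q : 'I_K -> R) :
  1 < al -> relint_simplex p -> relint_simplex q ->
  0 <= c -> al * (al - 1) * c = 2 * kappa ->
  (forall k, kappa * (p k - q k) ^+ 2 <= powR_bregman al (p k) (q k)) ->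
  C2K R K * c / 2 * norm1 (fun k => p k - q k) ^+ 2 <= Dalpha al p q.
Proof.
move=> al1 [_ p1] [q01 q1] c0 kappaE pointwise.
have al0 : 0 < al * (al - 1) by rewrite mulr_gt0 //; lra.
have q0 k : 0 < q k by case/andP: (q01 k).
have cE : c = (al * (al - 1))^-1 * (2 * kappa) by rewrite -kappaE mulKf ?gt_eqF.
have kappa0 : 0 <= kappa by move: c0; rewrite cE pmulr_rge0 ?invr_gt0 //; lra.
have sum0 : \sum_(k < K) (p k - q k) = 0 by rewrite sumrB p1 q1 subrr.
rewrite Dalpha_bregman ?gt_eqF ?(lt_eqF al1) ?(lt_trans ltr01) //.
set N := norm1 _ ^+ 2.
have -> : C2K R K * c / 2 * N = (al * (al - 1))^-1 * (kappa * (C2K R K * N)).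
  by rewrite cE; field; rewrite !gt_eqF //; lra.
rewrite ler_pM2l ?invr_gt0 //; apply: le_trans (ler_sum _ (fun k _ => pointwise k)).
by rewrite -mulr_sumr ler_wpM2l // C2K_norm1_sqr_le.
Qed.

End AlphaDivergence.

Theorem proposition3 (R : realType) (K : nat) (alpha : R)
  (halpha : 2 < alpha) (hK : (3 <= K)%N) (p q : 'I_K -> R)
  (hp : relint_simplex p) (hq : relint_simplex q) :
  let pq := fun k => p k - q k in
  let mpq := \big[Num.min/1]_(k < K) Num.min (p k) (q k) in
  let mp := \big[Num.min/1]_(k < K) p k in
  let mq := \big[Num.min/1]_(k < K) q k in
  [/\ Dalpha alpha p q >= (C2K R K * mpq `^ (alpha - 2)) / 2 * norm1 pq ^+ 2,
      Dalpha alpha p q >= (C2K R K * (2 / (alpha * (alpha - 1))) * mp `^ (alpha - 2))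
                            / 2 * norm1 pq ^+ 2
    & Dalpha alpha p q >= (C2K R K * (2 / alpha) * mq `^ (alpha - 2)) / 2 * norm1 pq ^+ 2].
Proof.
move=> pq mpq mp mq.
have p0 k : 0 < p k by case: hp => /(_ k) /andP[].
have q0 k : 0 < q k by case: hq => /(_ k) /andP[].
have al1 : 1 < alpha by lra.
have al2 : 2 <= alpha by exact: ltW.
have mpq0 : 0 <= mpq by apply/ltW/lt_bigmin => // k _; rewrite lt_min p0 q0.
have mp0 : 0 <= mp by apply/ltW/lt_bigmin => // k _; exact: p0.
have mq0 : 0 <= mq by apply/ltW/lt_bigmin => // k _; exact: q0.
have mpq_le k : mpq <= Num.min (p k) (q k) by exact: bigmin_le.
split.
- apply: (Dalpha_ge_norm1_sqr (kappa := alpha * (alpha - 1) * mpq `^ (alpha - 2) / 2)) => //.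
  + exact: powR_ge0.
  + by field.
  move=> k; have := mpq_le k; rewrite le_min => /andP[mp_le mq_le].
  exact: powR_bregman_ge_sqr.
- rewrite -[C2K R K * _ * _]mulrA.
  apply: (Dalpha_ge_norm1_sqr (kappa := mp `^ (alpha - 2))) => //.
  + by rewrite mulr_ge0 ?powR_ge0 // divr_ge0 // mulr_ge0 //; lra.
  + by field; rewrite !gt_eqF //; lra.
  by move=> k; apply: powR_bregman_ge_sqr_l; rewrite ?bigmin_le.
- rewrite -[C2K R K * _ * _]mulrA.
  apply: (Dalpha_ge_norm1_sqr (kappa := (alpha - 1) * mq `^ (alpha - 2))) => //.
  + by rewrite mulr_ge0 ?powR_ge0 // divr_ge0 //; lra.
  + by field; rewrite gt_eqF //; lra.
  by move=> k; apply: powR_bregman_ge_sqr_r; rewrite ?bigmin_le.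
Qed.
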